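(* Let $H=(V,E)$ be a hypergraph whose vertex set $V$ is a partition of $[n]$ into sets of cardinality at least $2$, and suppose $H$ is downward-closed (for every $e\in E$ and every $e'\subseteq e$ with $|e'|>1$, $e'\in E$). Then \[\operatorname{aff}\mathrm{MC}^H=\Big\{w\in\mathbb{R}^{\mathcal{J}^H}\ \Big|\ w(I)=1\ \forall I\in V;\ \ w_J=\sum_{J'\in\mathcal{J}^{e'}:\, J'\supsetneq J}w_{J'}\ \ \forall e,e'\in L(V)\cup E \text{ with } e\subsetneq e',\ |e'|=|e|+1,\ \forall J\in\mathcal{J}^e\Big\}.\]
   Context: Let $n$ be a positive integer, $[n]=\{1,\dots,n\}$. A hypergraph $H=(V,E)$ here has as vertex set $V$ a family of pairwise disjoint subsets of $[n]$, each of cardinality at least $2$, and hyperedge set $E$ consisting of subsets $e\subseteq V$ with $|e|\ge 2$. Write $L(V)=\{\{I\}: I\in V\}$. For a nonempty $e\subseteq V$, $\mathcal{J}^e$ denotes the family of sets $J\subseteq \bigcup_{I\in e} I$ with $|J\cap I|=1$ for every $I\in e$. Let $\mathcal{J}^H=\bigcup_{e\in L(V)\cup E}\mathcal{J}^e$. For $w\in\mathbb{R}^{\mathcal{J}^H}$ write $w_i=w_{\{i\}}$ and $w(A)=\sum_{i\in A}w_i$. Let $\mathscr{S}^H=\{w\in\{0,1\}^{\mathcal{J}^H}: w(I)=1\ \forall I\in V;\ w_J=\prod_{i\in J}w_i\ \forall J\in\mathcal{J}^H, |J|>1\}$, $\mathrm{MC}^H=\operatorname{conv}\mathscr{S}^H$,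 and $\operatorname{aff}$ denotes affine hull. *)

From HB Require Import structures.
From mathcomp Require Import all_boot all_order all_algebra.
Set Implicit Arguments. Unset Strict Implicit. Unset Printing Implicit Defensive.
Import Order.TTheory GRing.Theory Num.Theory.
Local Open Scope ring_scope.

(* Ground set [n] is represented by 'I_n = {0,...,n-1}. *)

Definition aff_hull (R : pzRingType) (T : finType) (A : {ffun T -> R} -> Prop)
  : {ffun T -> R} -> Prop :=
  fun w => exists (s : seq {ffun T -> R}) (c : seq R),
    [/\ size c = size s, (forall x, x \in s -> A x),
        \sum_(i < size s) c`_i = 1 &
        forall j, w j = \sum_(i < size s) c`_i * (s`_i) j].

Definition conv_hull (R : numDomainType) (T : finType) (A : {ffun T -> R} -> Prop)
  : {ffun T -> R} -> Prop :=
  fun w => exists (s : seq {ffun T -> R}) (c : seq R),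
    [/\ size c = size s, (forall x, x \in s -> A x), (forall a, a \in c -> 0 <= a),
        \sum_(i < size s) c`_i = 1 &
        forall j, w j = \sum_(i < size s) c`_i * (s`_i) j].

Section Hyper.
Variable n : nat.
Notation I := 'I_n.

Definition vertex_partition (V : {set {set I}}) : Prop :=
  partition V [set: I] /\ (forall X, X \in V -> 1 < #|X|)%N.

Definition hyperedges (V : {set {set I}}) (E : {set {set {set I}}}) : Prop :=
  forall e, e \in E -> e \subset V /\ (1 < #|e|)%N.

Definition downward_closed (E : {set {set {set I}}}) : Prop :=
  forall e e' : {set {set I}}, e \in E -> e' \subset e -> (1 < #|e'|)%N -> e' \in E.

Definition LV (V : {set {set I}}) : {set {set {set I}}} := [set [set X] | X in V].

Definition edgesLE (V : {set {set I}}) (E : {set {set {set I}}}) :=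
  LV V :|: E.

Definition Jof (e : {set {set I}}) : {set {set I}} :=
  [set J : {set I} | (J \subset \bigcup_(X in e) X) &&
                     [forall X in e, #|J :&: X| == 1%N]].

Definition JH (V : {set {set I}}) (E : {set {set {set I}}}) : {set {set I}} :=
  \bigcup_(e in edgesLE V E) Jof e.

Definition JHt (V : {set {set I}}) (E : {set {set {set I}}}) :=
  {J : {set I} | J \in JH V E}.
HB.instance Definition _ V E := Finite.on (JHt V E).

(* coordinate w_J (0 if J is not in J^H; only used for J in J^H) *)
Definition coord (R : pzRingType) V E (w : {ffun JHt V E -> R}) (J : {set I}) : R :=
  if insub J is Some j then w j else 0.

Definition wsum (R : pzRingType) V E (w : {ffun JHt V E -> R}) (A : {set I}) : R :=
  \sum_(i in A) coord w [set i].

Definition SH (R : pzRingType) V E : {ffun JHt V E -> R} -> Prop :=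
  fun w =>
    [/\ (forall j, w j = 0 \/ w j = 1),
        (forall X, X \in V -> wsum w X = 1) &
        (forall J, J \in JH V E -> (1 < #|J|)%N ->
           coord w J = \prod_(i in J) coord w [set i])].

Definition MC (R : numDomainType) V E : {ffun JHt V E -> R} -> Prop :=
  conv_hull (@SH R V E).

Definition RHS37 (R : pzRingType) V E : {ffun JHt V E -> R} -> Prop :=
  fun w =>
    (forall X, X \in V -> wsum w X = 1) /\
    (forall e e' : {set {set I}}, e \in edgesLE V E -> e' \in edgesLE V E ->
       e \proper e' -> #|e'| = #|e|.+1 ->
       forall J, J \in Jof e ->
         coord w J = \sum_(J' in Jof e' | J \proper J') coord w J').

End Hyper.

(* The equations are affine in w and hold at every point of S^H: if e' = e ∪ {Y}, the
   members of J^{e'} above J ∈ J^e are exactly the J ∪ {y}, y ∈ Y, and the products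
   w_{J ∪ {y}} = w_y w_J add up to w_J because w(Y) = 1.  Conversely, fix a transversal R
   of V.  A solution w is determined by its values on the J ∈ J^H avoiding R: for y ∈ J ∩ R,
   the equation at J \ y expresses w_J through coordinates with fewer points of R.  Completing
   each such J (or ∅) by the points of R in the blocks it misses gives a point of S^H whose
   coordinates on R-avoiding sets indicate the subsets of J; Möbius inversion over this
   down-closed family yields an affine combination of these points that agrees with w
   there, hence equals w. *)

From HB Require Import structures.
From mathcomp Require Import all_boot all_order all_algebra.
(* After all_algebra, so that [coord] is Defs.coord and not vector.coord. *)
From Pilot Require Import Defs.
Import Order.TTheory GRing.Theory Num.Theory.
Set Implicit Arguments. Unset Strict Implicit. Unset Printing Implicit Defensive.

Lemma cover_setU1 (T : finType) (A : {set T}) (P : {set {set T}}) :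
  cover (A |: P) = A :|: cover P.
Proof. by rewrite /cover bigcup_setU big_set1. Qed.

Lemma proper_succ_setU1 (T : finType) (A B : {set T}) :
  A \proper B -> #|B| = #|A|.+1 -> exists2 x, x \notin A & B = x |: A.
Proof.
move=> /properP[sAB _] cB.
have /cards1P[x defBA] : #|B :\: A| == 1%N.
  by rewrite cardsD (setIidPr sAB) cB subSnn.
have : x \in B :\: A by rewrite defBA set11.
rewrite inE => /andP[xA xB]; exists x => //.
by rewrite -defBA setUC -{1}(setID B A) (setIidPr sAB).
Qed.

Section Mobius.
Variables (R : pzRingType) (T : finType).
Implicit Types (A B C J K L : {set T}).
Local Open Scope ring_scope.

Lemma sum_sign_interval A B : A \proper B ->
  \sum_(C : {set T} | (A \subset C) && (C \subset B)) (-1) ^+ #|C| = 0 :> R.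
Proof.
move=> /properP[sAB [x xB xA]].
pose toggle C := if x \in C then C :\ x else x |: C.
have toggleK : involutive toggle.
  move=> C; rewrite /toggle; case xC: (x \in C); first by rewrite setD11 setD1K.
  by rewrite setU11 setU1K ?xC.
have mem_toggle C : (x \in toggle C) = (x \notin C).
  by rewrite /toggle; case: ifP; rewrite ?setD11 ?setU11.
have sign_toggle C : (-1) ^+ #|toggle C| = - (-1) ^+ #|C| :> R.
  rewrite /toggle; case: ifP => xC; last by rewrite cardsU1 xC exprS mulN1r.
  by rewrite [in RHS](cardsD1 x C) xC exprS mulN1r opprK.
have in_interval C :
    (A \subset C) && (C \subset B) = (A \subset C :\ x) && (C :\ x \subset B).
  by rewrite subsetD1 xA andbT subDset (setUidPr _) // sub1set.
have toggleD1 C : toggle C :\ x = C :\ x.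
  by apply/setP => z; rewrite /toggle; case: ifP => _; rewrite !inE; case: eqP.
rewrite (bigID (fun C => x \in C)) /= (reindex_inj (inv_inj toggleK)) /=.
apply/eqP; rewrite addr_eq0 -sumrN; apply/eqP.
apply: eq_big => [C|C _]; last exact: sign_toggle.
by rewrite in_interval [in RHS]in_interval toggleD1 mem_toggle.
Qed.

Lemma mobius_subsets (F : {set {set T}})
    (downF : forall K L, K \in F -> L \subset K -> L \in F)
    (W : {set T} -> R) J : J \in F ->
  \sum_(K in F | J \subset K)
     (-1) ^+ #|K| * \sum_(K' in F | K \subset K') (-1) ^+ #|K'| * W K' = W J.
Proof.
move=> JF; under eq_bigr do rewrite mulr_sumr.
rewrite (exchange_big_dep (fun K' => (K' \in F) && (J \subset K'))) /=; last first.
  by move=> K K' /andP[_ JK] /andP[K'F KK']; rewrite K'F (subset_trans JK KK').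
rewrite (bigD1 J) /=; last by rewrite JF subxx.
rewrite [X in _ + X]big1 ?addr0; last first.
  move=> K' /andP[/andP[K'F JK'] K'J]; rewrite -mulr_suml.
  rewrite (eq_bigl (fun K => (J \subset K) && (K \subset K')));
    rewrite ?sum_sign_interval ?mul0r //.
    by rewrite properEneq eq_sym K'J.
  move=> K; apply/andP/andP => [[/andP[_ ->] /andP[_ ->]]|[JK KK']] //.
  by split; rewrite ?JK ?KK' (downF K') ?andbT.
rewrite (big_pred1 J) => [|K]; first by rewrite mulrA -expr2 sqrr_sign mul1r.
apply/andP/eqP => [[/andP[_ JK] /andP[_ KJ]]|->]; last by rewrite JF subxx.
by apply/eqP; rewrite eqEsubset KJ JK.
Qed.

End Mobius.

Section Hulls.
Variables (R : pzRingType) (T : finType).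
Implicit Types (A B : {ffun T -> R} -> Prop).
Local Open Scope ring_scope.

Lemma aff_hull_mono A B w : (forall x, A x -> B x) -> aff_hull A w -> aff_hull B w.
Proof. by move=> sAB [s [c [? hs ? ?]]]; exists s, c; split=> // x /hs /sAB. Qed.

Lemma aff_hull_sum A (I : eqType) (r : seq I) (c : I -> R) (x : I -> {ffun T -> R}) :
  (forall i, i \in r -> A (x i)) -> \sum_(i <- r) c i = 1 ->
  aff_hull A [ffun t => \sum_(i <- r) c i * x i t].
Proof.
move=> Ax c1; exists [seq x i | i <- r], [seq c i | i <- r].
have nth_sum (G : R -> {ffun T -> R} -> R) :
    \sum_(k < size [seq x i | i <- r]) G [seq c i | i <- r]`_k [seq x i | i <- r]`_k
    = \sum_(i <- r) G (c i) (x i).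
  by elim: r {Ax c1} => [|i r IH]; rewrite ?big_ord0 ?big_nil // big_ord_recl big_cons IH.
split; first by rewrite !size_map.
- by move=> _ /mapP[i ir ->]; apply: Ax.
- by rewrite (nth_sum (fun a _ => a)).
- by move=> t; rewrite ffunE (nth_sum (fun a y => a * y t)).
Qed.

End Hulls.

Section ConvHull.
Variables (R : numDomainType) (T : finType).
Implicit Types (A : {ffun T -> R} -> Prop).
Local Open Scope ring_scope.

Lemma conv_hull_aff_hull A w : conv_hull A w -> aff_hull A w.
Proof. by move=> [s [c [? ? _ ? ?]]]; exists s, c. Qed.

Lemma mem_conv_hull A x : A x -> conv_hull A x.
Proof.
move=> Ax; exists [:: x], [:: 1]; split => //.
- by move=> y; rewrite mem_seq1 => /eqP ->.
- by move=> a; rewrite mem_seq1 => /eqP ->; apply: ler01.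
- by rewrite big_ord1.
- by move=> t; rewrite big_ord1 mul1r.
Qed.

End ConvHull.

Section Transversals.
Variable n : nat.
Implicit Types (e : {set {set 'I_n}}) (J K : {set 'I_n}).

Lemma JofP e K :
  reflect (K \subset cover e /\ {in e, forall X, #|K :&: X| = 1%N}) (K \in Jof e).
Proof.
rewrite inE; apply: (iffP andP) => [[sK /forall_inP cK]|[sK cK]].
  by split=> // X /cK /eqP.
by split=> //; apply/forall_inP => X /cK ->.
Qed.

Lemma Jof_card1_eq e K X i j :
  K \in Jof e -> X \in e -> i \in K -> j \in K -> i \in X -> j \in X -> i = j.
Proof.
move=> /JofP[_ cK] /cK cKX iK jK iX jX.
have /card_le1_eqP eqK : (#|K :&: X| <= 1)%N by rewrite cKX.
by apply: eqK; rewrite inE ?iK ?jK.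
Qed.

Lemma Jof_meet e K X : K \in Jof e -> X \in e -> exists2 k, k \in K & k \in X.
Proof.
move=> /JofP[_ cK] /cK /eqP /cards1P[k defKX].
have /setIP[kK kX] : k \in K :&: X by rewrite defKX set11.
by exists k.
Qed.

Lemma Jof_subset_eq e J K : J \in Jof e -> K \in Jof e -> J \subset K -> J = K.
Proof.
move=> HJ HK sJK; apply/eqP; rewrite eqEsubset sJK; apply/subsetP => i iK.
have /JofP[sK _] := HK; have /bigcupP[X Xe iX] := subsetP sK i iK.
have [j jJ jX] := Jof_meet HJ Xe.
by rewrite (Jof_card1_eq HK Xe iK (subsetP sJK j jJ) iX jX).
Qed.

Lemma Jof_neq0 e K : e != set0 -> K \in Jof e -> K != set0.
Proof.
by move=> /set0Pn[X Xe] HK; have [k kK _] := Jof_meet HK Xe; apply/set0Pn; exists k.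
Qed.

Lemma Jof_restrict e e' K : e \subset e' -> K \in Jof e' -> K :&: cover e \in Jof e.
Proof.
move=> see' /JofP[_ cK]; apply/JofP; split; first exact: subsetIr.
move=> X Xe; rewrite -setIA (setIidPr (bigcup_sup X Xe)).
exact: cK (subsetP see' X Xe).
Qed.

Section Successors.
Variables (e : {set {set 'I_n}}) (Y J : {set 'I_n}).
Hypotheses (dYe : [disjoint Y & cover e]) (HJ : J \in Jof e).

Lemma notin_Jof_disjoint y : y \in Y -> y \notin J.
Proof.
move=> yY; have /JofP[sJ _] := HJ.
by apply: contraL yY => /(subsetP sJ) /(disjointFl dYe) ->.
Qed.

Lemma Jof_setU1 y : y \in Y -> y |: J \in Jof (Y |: e).
Proof.
move=> yY; have /JofP[sJ cJ] := HJ.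
apply/JofP; split.
  by rewrite cover_setU1 setUSS // sub1set.
move=> X /setU1P[->|Xe].
  rewrite setIUl (setIidPl _) ?sub1set //.
  rewrite (_ : J :&: Y = set0) ?setU0 ?cards1 // setIC.
  exact/disjoint_setI0/(disjointWr sJ).
have yX : y \notin X.
  by rewrite (disjointFr (disjointWr (bigcup_sup X Xe) dYe) yY).
rewrite setIUl (_ : [set y] :&: X = set0) ?set0U ?cJ //.
by apply/setP => i; rewrite !inE; case: eqP => // ->; rewrite (negbTE yX).
Qed.

Lemma Jof_succ : [set K in Jof (Y |: e) | J \proper K] = [set y |: J | y in Y].
Proof.
apply/setP => K; rewrite inE; apply/andP/imsetP => [[HK /properP[sJK _]]|[y yY ->]].
  have eqJ : J = K :&: cover e.
    apply: Jof_subset_eq HJ (Jof_restrict (subsetUr _ _) HK) _.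
    by rewrite subsetI sJK; case/JofP: HJ.
  have /JofP[sK cK] := HK.
  have /cards1P[y defKY] := introT eqP (cK Y (setU11 Y e)).
  have : y \in K :&: Y by rewrite defKY set11.
  rewrite inE => /andP[_ yY]; exists y => //.
  by rewrite eqJ -defKY -setIUr -cover_setU1 (setIidPl sK).
split; first exact: Jof_setU1.
by rewrite properUr // sub1set notin_Jof_disjoint.
Qed.

Lemma sum_Jof_succ (R : nmodType) (F : {set 'I_n} -> R) :
  (\sum_(K in Jof (Y |: e) | J \proper K) F K = \sum_(y in Y) F (y |: J))%R.
Proof.
have inj : {in Y &, injective (fun y => y |: J)}.
  move=> y y' yY y'Y /setP /(_ y); rewrite !inE eqxx /= => /esym /orP[/eqP //|].
  by rewrite (negbTE (notin_Jof_disjoint yY)).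
rewrite -(big_imset _ inj) -Jof_succ.
by apply: eq_bigl => K; rewrite !inE.
Qed.

End Successors.
End Transversals.

Section Partition.
Variables (n : nat) (V : {set {set 'I_n}}) (E : {set {set {set 'I_n}}}).
Hypothesis partV : partition V [set: 'I_n].
Implicit Types (e : {set {set 'I_n}}) (J K L : {set 'I_n}).

Let trivV : trivIset V. Proof. by case/and3P: partV. Qed.

Lemma pblock_partVE X i : X \in V -> i \in X -> pblock V i = X.
Proof. exact: def_pblock. Qed.

Lemma pblock_partV i : pblock V i \in V.
Proof. by rewrite pblock_mem // (cover_partition partV). Qed.

Lemma mem_pblock_partV i : i \in pblock V i.
Proof. by rewrite mem_pblock (cover_partition partV). Qed.

Lemma transversal_Jof : transversal V [set: 'I_n] \in Jof V.
Proof.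
have /and3P[_ _ /forall_inP cR] := transversalP partV.
apply/JofP; split; first by rewrite (cover_partition partV) subsetT.
by move=> X /cR /eqP.
Qed.

Lemma disjoint_cover_notin e Y :
  e \subset V -> Y \in V -> Y \notin e -> [disjoint Y & cover e].
Proof.
move=> /subsetP eV YV Ye; apply: bigcup_disjoint => X Xe.
apply: (trivIsetP trivV) => //; first exact: eV.
by apply: contraNneq Ye => ->.
Qed.

Lemma Jof_pblock e K k : e \subset V -> K \in Jof e -> k \in K -> pblock V k \in e.
Proof.
move=> /subsetP eV /JofP[sK _] /(subsetP sK) /bigcupP[X Xe kX].
by rewrite (pblock_partVE (eV X Xe) kX).
Qed.

Lemma Jof_setD1 e J y :
  e \subset V -> J \in Jof e -> y \in J -> J :\ y \in Jof (e :\ pblock V y).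
Proof.
move=> eV HJ yJ; set Y := pblock V y.
have Ye : Y \in e := Jof_pblock eV HJ yJ.
suff -> : J :\ y = J :&: cover (e :\ Y) by exact: Jof_restrict (subD1set e Y) HJ.
have /JofP[sJ _] := HJ.
rewrite coverD1 ?(trivIsetS eV) // setIDA (setIidPl sJ).
apply/setP => i; rewrite !inE; case iJ: (i \in J); rewrite ?andbT ?andbF //.
congr negb; apply/eqP/idP => [-> | iY]; first exact: mem_pblock_partV.
exact: Jof_card1_eq HJ Ye iJ yJ iY (mem_pblock_partV y).
Qed.

Hypotheses (HE : hyperedges V E) (HD : downward_closed E).

Lemma edgesLE_subV e : e \in edgesLE V E -> e \subset V.
Proof. by rewrite !inE => /orP[/imsetP[X XV ->]|/HE[]//]; rewrite sub1set. Qed.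

Lemma edgesLE_neq0 e : e \in edgesLE V E -> e != set0.
Proof.
rewrite -card_gt0 !inE => /orP[/imsetP[X _ ->]|/HE[_ /ltnW]] //.
by rewrite cards1.
Qed.

Lemma edgesLE_sub e e0 :
  e \in edgesLE V E -> e0 \subset e -> e0 != set0 -> e0 \in edgesLE V E.
Proof.
move=> He se0 e0n0; rewrite !inE.
have [c1|c2] := leqP #|e0| 1.
  have /cards1P[X defe0] : #|e0| == 1 by rewrite eqn_leq c1 card_gt0.
  apply/orP; left; rewrite defe0; apply/imset_f.
  by rewrite -sub1set -defe0 (subset_trans se0 (edgesLE_subV He)).
apply/orP; right; move: He; rewrite !inE => /orP[/imsetP[X _ eX]|eE].
  by move: (subset_leq_card se0); rewrite eX cards1 leqNgt c2.
exact: HD eE se0 c2.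
Qed.

Lemma set1_JH i : [set i] \in JH V E.
Proof.
apply/bigcupP; exists [set pblock V i].
  by rewrite !inE; apply/orP; left; apply/imset_f/pblock_partV.
apply/JofP; split; first by rewrite cover1 sub1set mem_pblock_partV.
by move=> X /set1P ->; rewrite (setIidPl _) ?cards1 // sub1set mem_pblock_partV.
Qed.

Lemma JH_neq0 K : K \in JH V E -> K != set0.
Proof. by move=> /bigcupP[e /edgesLE_neq0]; apply: Jof_neq0. Qed.

Lemma JH_sub K L : K \in JH V E -> L \subset K -> L != set0 -> L \in JH V E.
Proof.
move=> /bigcupP[e He HK] sLK Ln0; have eV := edgesLE_subV He.
set e0 := [set pblock V i | i in L].
have se0 : e0 \subset e.
  by apply/subsetP => _ /imsetP[i iL ->]; apply: Jof_pblock eV HK (subsetP sLK i iL).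
have e0n0 : e0 != set0 by rewrite imset_eq0.
apply/bigcupP; exists e0; first exact: edgesLE_sub He se0 e0n0.
suff -> : L = K :&: cover e0 by apply: Jof_restrict se0 HK.
apply/eqP; rewrite eqEsubset subsetI sLK cover_imset /=; apply/andP; split.
  by apply/subsetP => i iL; apply/bigcupP; exists i => //; apply: mem_pblock_partV.
apply/subsetP => i /setIP[iK /bigcupP[l lL il]].
have lK := subsetP sLK l lL.
by rewrite (Jof_card1_eq HK (Jof_pblock eV HK lK) iK lK il (mem_pblock_partV l)).
Qed.

Lemma JH_exchange J y y' :
  J \in JH V E -> y \in J -> y' \in pblock V y -> y' |: (J :\ y) \in JH V E.
Proof.
move=> /bigcupP[e He HJ] yJ y'Y; apply/bigcupP; exists e => //.
have eV := edgesLE_subV He; have Ye := Jof_pblock eV HJ yJ.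
rewrite -(setD1K Ye); apply: Jof_setU1 y'Y; last exact: Jof_setD1.
apply: disjoint_cover_notin; rewrite ?pblock_partV ?setD11 //.
exact: subset_trans (subD1set _ _) eV.
Qed.

End Partition.

Section Coordinates.
Variables (R : pzRingType) (n : nat) (V : {set {set 'I_n}}) (E : {set {set {set 'I_n}}}).
Local Notation vec := {ffun JHt V E -> R}.
Local Open Scope ring_scope.

Lemma coordE (w : vec) (j : JHt V E) : coord w (val j) = w j.
Proof. by rewrite /coord valK. Qed.

Lemma coord_lin (I : Type) (r : seq I) (P : pred I) (c : I -> R) (x : I -> vec) (w : vec) :
  (forall j, w j = \sum_(i <- r | P i) c i * x i j) ->
  forall J, coord w J = \sum_(i <- r | P i) c i * coord (x i) J.
Proof.
move=> hw J; rewrite /coord; case: insub => [j|]; first exact: hw.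
by rewrite big1 // => i _; rewrite mulr0.
Qed.

Lemma RHS37_aff_hull_closed (w : vec) : aff_hull (@RHS37 n R V E) w -> RHS37 w.
Proof.
move=> [s [c [_ hs hc /coord_lin hw]]].
have hsi (i : 'I_(size s)) : RHS37 s`_i by apply/hs/mem_nth.
split=> [X XV | e e' He He' pr ce J HJ].
  rewrite /wsum; under eq_bigr do rewrite hw.
  rewrite exchange_big -[RHS]hc; apply: eq_bigr => i _.
  by rewrite -mulr_sumr; have := (hsi i).1 X XV; rewrite /wsum => ->; rewrite mulr1.
rewrite hw; under [RHS]eq_bigr do rewrite hw.
rewrite exchange_big; apply: eq_bigr => i _.
by rewrite -mulr_sumr ((hsi i).2 e e' He He' pr ce J HJ).
Qed.

(* The convention w_∅ = 1 turns the vertex equations w(I) = 1 into the edge equations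
   for e = ∅. *)
Definition xcoord (w : vec) (K : {set 'I_n}) : R := if K == set0 then 1 else coord w K.

End Coordinates.

Section Equations.
Variables (n : nat) (V : {set {set 'I_n}}) (E : {set {set {set 'I_n}}}).
Hypotheses (partV : partition V [set: 'I_n]) (HE : hyperedges V E) (HD : downward_closed E).
Local Open Scope ring_scope.

Lemma xcoordE (R : pzRingType) (w : {ffun JHt V E -> R}) K :
  K \in JH V E -> xcoord w K = coord w K.
Proof. by move=> /(JH_neq0 HE) /negbTE; rewrite /xcoord => ->. Qed.

Lemma RHS37_expand (R : pzRingType) (w : {ffun JHt V E -> R}) J y :
  RHS37 w -> J \in JH V E -> y \in J ->
  xcoord w (J :\ y) = \sum_(y' in pblock V y) coord w (y' |: (J :\ y)).
Proof.
move=> [hV hE] /bigcupP[e' He' HJ] yJ.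
set Y := pblock V y; set K := J :\ y; set e := e' :\ Y.
have e'V := edgesLE_subV HE He'.
have Ye' : Y \in e' := Jof_pblock partV e'V HJ yJ.
have HK : K \in Jof e := Jof_setD1 partV e'V HJ yJ.
rewrite /xcoord; case: eqP => [K0|/eqP Kn0].
  rewrite -(hV Y (pblock_partV partV y)); apply: eq_bigr => i _.
  by rewrite K0 setU0.
have He : e \in edgesLE V E.
  apply: (edgesLE_sub HE HD He' (subD1set _ _)); apply: contraNneq Kn0 => e0.
  have /JofP[sK _] := HK.
  by move: sK; rewrite /e e0 /cover big_set0 subset0.
have dYe : [disjoint Y & cover e].
  apply: (disjoint_cover_notin partV _ (pblock_partV partV y)); last by rewrite setD11.
  exact: subset_trans (subD1set _ _) e'V.
have ce : #|e'| = #|e|.+1 by rewrite (cardsD1 Y e') Ye'.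
rewrite (hE e e' He He' (properD1 Ye') ce K HK).
by rewrite -(setD1K Ye') (sum_Jof_succ dYe HK).
Qed.

Lemma SH_coord_prod (R : comPzRingType) (x : {ffun JHt V E -> R}) J :
  SH x -> J \in JH V E -> coord x J = \prod_(i in J) coord x [set i].
Proof.
move=> [_ _ hprod] HJ; have [/(hprod _ HJ) -> //|] := ltnP 1 #|J|.
rewrite leq_eqVlt ltnS leqn0 cards_eq0 (negbTE (JH_neq0 HE HJ)) orbF.
by move=> /cards1P[i ->]; rewrite big_set1.
Qed.

Lemma SH_RHS37 (R : comPzRingType) (x : {ffun JHt V E -> R}) : SH x -> RHS37 x.
Proof.
move=> hx; have [_ hV _] := hx; split=> // e e' He He' pr ce J HJ.
have [Y Ye defe'] := proper_succ_setU1 pr ce.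
have YV : Y \in V by apply: (subsetP (edgesLE_subV HE He')); rewrite defe' setU11.
have dYe := disjoint_cover_notin partV (edgesLE_subV HE He) YV Ye.
have JJH : J \in JH V E by apply/bigcupP; exists e.
rewrite defe' (sum_Jof_succ dYe HJ).
transitivity (\sum_(y in Y) coord x [set y] * coord x J).
  by rewrite -mulr_suml; have := hV Y YV; rewrite /wsum => ->; rewrite mul1r.
apply: eq_bigr => y yY.
have yJH : y |: J \in JH V E.
  by apply/bigcupP; exists e'; rewrite // defe' Jof_setU1.
rewrite (SH_coord_prod hx yJH) big_setU1 ?(notin_Jof_disjoint dYe HJ) //=.
by rewrite -(SH_coord_prod hx JJH).
Qed.

Lemma RHS37_unique (R : pzRingType) (Rf : {set 'I_n}) (u v : {ffun JHt V E -> R}) :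
  Rf \in Jof V -> RHS37 u -> RHS37 v ->
  (forall J, J \in JH V E -> [disjoint J & Rf] -> coord u J = coord v J) -> u = v.
Proof.
move=> HR hu hv huv.
suff eq_uv m K : (#|K :&: Rf| < m)%N -> K \in JH V E -> coord u K = coord v K.
  by apply/ffunP => j; rewrite -!coordE (eq_uv _ _ (ltnSn _) (valP j)).
elim: m K => // m IH K cK HK.
have [dKR|] := boolP [disjoint K & Rf]; first exact: huv.
rewrite -setI_eq0 => /set0Pn[y /setIP[yK yR]].
have ltKy : (#|(K :\ y) :&: Rf| < m)%N.
  by rewrite -ltnS (leq_trans _ cK) // ltnS proper_card // setIDAC properD1 // inE yK yR.
have eqK : xcoord u (K :\ y) = xcoord v (K :\ y).
  rewrite /xcoord; case: eqP => // /eqP Kn0.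
  exact: IH ltKy (JH_sub partV HE HD HK (subD1set K y) Kn0).
have eq_swap : \sum_(y' in pblock V y | y' != y) coord u (y' |: (K :\ y)) =
               \sum_(y' in pblock V y | y' != y) coord v (y' |: (K :\ y)).
  apply: eq_bigr => y' /andP[y'Y y'y]; apply: IH (JH_exchange partV HE HK yK y'Y).
  have y'R : y' \notin Rf.
    apply: contra y'y => y'R; apply/eqP.
    exact: Jof_card1_eq HR (pblock_partV partV y) y'R yR y'Y (mem_pblock_partV partV y).
  rewrite setIUl (_ : [set y'] :&: Rf = set0) ?set0U //.
  by apply/setP => z; rewrite !inE; case: eqP => // ->; rewrite (negbTE y'R).
have := RHS37_expand hu HK yK; have := RHS37_expand hv HK yK.
rewrite !(bigD1 y (mem_pblock_partV partV y)) /= setD1K // => exp_v exp_u.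
apply: (addIr (\sum_(y' in pblock V y | y' != y) coord u (y' |: (K :\ y)))).
by rewrite -exp_u eqK exp_v eq_swap.
Qed.

End Equations.

Section AffineHull.
Variables (n : nat) (V : {set {set 'I_n}}) (E : {set {set {set 'I_n}}}).
Hypotheses (partV : partition V [set: 'I_n]) (HE : hyperedges V E) (HD : downward_closed E).
Implicit Types (Rf J K L S : {set 'I_n}).
Local Open Scope ring_scope.

Definition completion (Rf K : {set 'I_n}) : {set 'I_n} :=
  K :|: [set r in Rf | [disjoint pblock V r & K]].

Lemma completion_Jof Rf K :
  Rf \in Jof V -> (K == set0) || (K \in JH V E) -> completion Rf K \in Jof V.
Proof.
move=> /JofP[_ cR] HK; apply/JofP; split; first by rewrite (cover_partition partV) subsetT.
move=> X XV.
have -> : completion Rf K :&: X = if [disjoint X & K] then Rf :&: X else K :&: X.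
  case: ifP => dXK; apply/setP => z; rewrite !inE;
    case zX: (z \in X); rewrite ?andbF ?andbT // (pblock_partVE partV XV zX) dXK.
    by rewrite (disjointFr dXK zX) andbT.
  by rewrite andbF orbF.
case: ifPn => [_|]; first exact: cR.
rewrite -setI_eq0 => /set0Pn[k /setIP[kX kK]].
have /bigcupP[e He HKe] : K \in JH V E by case/orP: HK => // /eqP K0; rewrite K0 inE in kK.
have /JofP[_ cK] := HKe; apply: cK.
rewrite -(pblock_partVE partV XV kX).
exact: (Jof_pblock partV (edgesLE_subV HE He) HKe kK).
Qed.

Lemma completion_subset Rf K J :
  [disjoint J & Rf] -> (J \subset completion Rf K) = (J \subset K).
Proof.
move=> dJ; apply/idP/idP => [/subsetP sJ|sJK]; last exact: subset_trans sJK (subsetUl _ _).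
apply/subsetP => z zJ; have /setUP[//|] := sJ z zJ.
by rewrite inE (disjointFr dJ zJ).
Qed.

Definition transversal_point (R : pzRingType) (S : {set 'I_n}) : {ffun JHt V E -> R} :=
  [ffun j : JHt V E => if val j \subset S then 1 else 0].

Lemma coord_transversal_point (R : pzRingType) S J : J \in JH V E ->
  coord (transversal_point R S) J = if J \subset S then 1 else 0.
Proof. by move=> HJ; rewrite /coord insubT ffunE. Qed.

Lemma SH_transversal_point (R : comPzRingType) S :
  S \in Jof V -> SH (transversal_point R S).
Proof.
move=> /JofP[_ cS]; have tp1 i := coord_transversal_point R S (set1_JH E partV i).
split=> [j | X XV | J HJ _].
- by rewrite ffunE; case: ifP; [right | left].
- rewrite /wsum; under eq_bigr do rewrite tp1 sub1set.
  rewrite -big_mkcondr sumr_const (@eq_card _ _ (S :&: X)) ?cS // => i.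
  by rewrite !inE andbC.
- rewrite coord_transversal_point //; under eq_bigr do rewrite tp1 sub1set.
  have [sJS|/subsetPn[i iJ iS]] := boolP (J \subset S).
    by rewrite big1 // => i /(subsetP sJS) ->.
  by rewrite (bigD1 i iJ) /= (negbTE iS) mul0r.
Qed.

Lemma aff_hull_MC_RHS37 (R : numDomainType) (w : {ffun JHt V E -> R}) :
  aff_hull (@MC n R V E) w -> RHS37 w.
Proof.
have MC_RHS37 (x : {ffun JHt V E -> R}) : MC x -> RHS37 x.
  move/conv_hull_aff_hull/(aff_hull_mono (@SH_RHS37 _ _ _ partV HE R)).
  exact: RHS37_aff_hull_closed.
by move=> hw; apply: RHS37_aff_hull_closed; apply: aff_hull_mono hw.
Qed.

Definition JH_avoiding Rf : {set {set 'I_n}} :=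
  [set K | ((K == set0) || (K \in JH V E)) && [disjoint K & Rf]].

Lemma JH_avoiding_sub Rf K L : K \in JH_avoiding Rf -> L \subset K -> L \in JH_avoiding Rf.
Proof.
rewrite !inE => /andP[HK dK] sLK; rewrite (disjointWl sLK dK) andbT.
have [//|Ln0] := eqVneq L set0; case/orP: HK => [/eqP K0|HK].
  by rewrite K0 subset0 (negbTE Ln0) in sLK.
by rewrite (JH_sub partV HE HD HK sLK Ln0) orbT.
Qed.

Lemma RHS37_aff_hull (R : numDomainType) (w : {ffun JHt V E -> R}) :
  RHS37 w -> aff_hull (@MC n R V E) w.
Proof.
move=> hw; set Rf := transversal V [set: 'I_n]; set F := JH_avoiding Rf.
pose coef K := (-1) ^+ #|K| * \sum_(K' in F | K \subset K') (-1) ^+ #|K'| * xcoord w K'.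
have coefE J : J \in F -> \sum_(K in F | J \subset K) coef K = xcoord w J.
  exact: mobius_subsets (@JH_avoiding_sub Rf) (xcoord w) J.
pose v : {ffun JHt V E -> R} :=
  [ffun j => \sum_(K <- enum F) coef K * transversal_point R (completion Rf K) j].
have aff_v : aff_hull (@MC n R V E) v.
  apply: aff_hull_sum => [K|]; last first.
    have F0 : set0 \in F by rewrite inE eqxx; apply: eq_disjoint0 => x; rewrite inE.
    rewrite big_enum; have := coefE _ F0; rewrite /xcoord eqxx => <-.
    by apply: eq_bigl => K; rewrite sub0set andbT.
  rewrite mem_enum inE => /andP[HK _].
  exact/mem_conv_hull/SH_transversal_point/completion_Jof/HK/transversal_Jof.
suff -> : w = v by [].
apply: (RHS37_unique partV HE HD (transversal_Jof partV) hw (aff_hull_MC_RHS37 aff_v)).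
move=> J HJ dJ; rewrite (coord_lin (fun j => ffunE _ j)) big_enum -(xcoordE HE _ HJ).
rewrite -coefE ?inE ?HJ ?orbT // big_mkcondr; apply: eq_bigr => K _.
rewrite coord_transversal_point // completion_subset //.
by case: ifP; rewrite ?mulr1 ?mulr0.
Qed.

End AffineHull.

Theorem corollary3p7 (R : realFieldType) (n : nat)
    (V : {set {set 'I_n}}) (E : {set {set {set 'I_n}}}) :
  vertex_partition V -> hyperedges V E -> downward_closed E ->
  forall w : {ffun JHt V E -> R},
    aff_hull (@MC n R V E) w <-> RHS37 w.
Proof.
move=> [partV _] HE HD w; split; first exact: aff_hull_MC_RHS37.
exact: RHS37_aff_hull.
Qed.
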